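(* Let $\Theta$ be a variety, $H\in\Theta$, $X\in\Gamma^0$, and let $s:W(X^0)\to W(X)$ be a special homomorphism. Then for every $X$-type $T$ we have $T^{L_0}_H=(s_*T)^L_H$, where $s_*T=\{s_*u\mid u\in T\}$.
   Context: Setting: variety $\Theta$, infinite variable set $X^0$, $\Gamma^0$ its finite subsets, $W(X)$ free $\Theta$-algebras, points $\mu:W(X)\to H$. $\Phi(X^0)$ is the one-sorted algebra of first-order formulas (modulo logical equivalence) over variables $X^0$ built from equalities $w\equiv w'$, $w,w'\in W(X^0)$; $Val^{X^0}_H(u)$ is the set of $\eta:W(X^0)\to H$ satisfying $u$. For $X\in\Gamma^0$, $\Phi(X)$ is the $X$-sort of the multi-sorted algebra of formulas over $\Theta$ with valuation $Val^X_H$, $LKer(\mu)=\{u\in\Phi(X):\mu\in Val^X_H(u)\}$, and for $T\subset\Phi(X)$, $T^L_H=\{\mu\mid T\subset LKer(\mu)\}$. A special homomorphism $s:W(X^0)\to W(X)$ satisfies $s(x)=x$ for $x\in X$; it induces $s_*:\Phi(X^0)\to\Phi(X)$ with $Val^X_H(s_*u)=\{\mu\mid\mu s\in Val^{X^0}_H(u)\}$. For $X=\{x_1,\dots,x_n\}$ a formula is $X$-special if its free variables lie in $X$ and its bound variables in $X^0\setminus X$; an $X$-type is a set of $X$-special formulas consistent with the elementary theory of $H$. $Tp^H(\mu)$ (with $a_i=\mu(x_i)$) is the set of $X$-special $u(x_1,\dots,x_n;y_1,\dots,y_m)$ with $u(a_1,\dots,a_n;y_1,\dots,y_m)$ true in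 $H$. For an $X$-type $T$, $T^{L_0}_H=\{\mu:W(X)\to H\mid T\subset Tp^H(\mu)\}$. *)

From mathcomp Require Import all_boot.
Set Implicit Arguments.
Unset Strict Implicit.
Unset Printing Implicit Defensive.

Record signature := Signature { op :> Type; arity : op -> nat }.

Inductive term (S : signature) (V : Type) : Type :=
| Var (v : V)
| App (o : op S) (args : 'I_(arity o) -> term S V).
Arguments Var {S V} v.
Arguments App {S V} o args.

Record algebra (S : signature) := Algebra {
  carrier :> Type;
  interp : forall o : op S, ('I_(arity o) -> carrier) -> carrier }.

Fixpoint eval (S : signature) (V : Type) (A : algebra S) (e : V -> A)
  (t : term S V) : A :=
  match t with
  | Var v => e v
  | App o args => @interp S A o (fun i => eval e (args i))
  end.

(* A variety Theta, given by its defining identities (Birkhoff). *)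
Record variety (S : signature) := Variety {
  identities : term S nat -> term S nat -> Prop }.

Definition in_variety (S : signature) (Th : variety S) (H : algebra S) : Prop :=
  forall l r, identities Th l r -> forall e : nat -> H, eval e l = eval e r.

Definition upd (V : eqType) (A : Type) (e : V -> A) (x : V) (a : A) : V -> A :=
  fun y => if y == x then a else e y.

(* ---------- One-sorted formulas Phi(X^0) over variables V = X^0 ---------- *)
Inductive formula (S : signature) (V : Type) : Type :=
| FEq (t1 t2 : term S V)
| FNot (u : formula S V)
| FAnd (u1 u2 : formula S V)
| FOr (u1 u2 : formula S V)
| FEx (x : V) (u : formula S V)
| FAll (x : V) (u : formula S V).
Arguments FEq {S V} t1 t2.

Fixpoint sat (S : signature) (V : eqType) (A : algebra S) (e : V -> A)
  (u : formula S V) : Prop :=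
  match u with
  | FEq t1 t2 => eval e t1 = eval e t2
  | FNot u => ~ sat e u
  | FAnd u1 u2 => sat e u1 /\ sat e u2
  | FOr u1 u2 => sat e u1 \/ sat e u2
  | FEx x u => exists a : A, sat (upd e x a) u
  | FAll x u => forall a : A, sat (upd e x a) u
  end.

Definition Val0 (S : signature) (V : eqType) (A : algebra S) (u : formula S V)
  : (V -> A) -> Prop := fun e => sat e u.

Fixpoint occurs (S : signature) (V : Type) (x : V) (t : term S V) : Prop :=
  match t with
  | Var v => v = x
  | App o args => exists i, occurs x (args i)
  end.

Fixpoint free_in (S : signature) (V : Type) (x : V) (u : formula S V) : Prop :=
  match u with
  | FEq t1 t2 => occurs x t1 \/ occurs x t2
  | FNot u => free_in x u
  | FAnd u1 u2 | FOr u1 u2 => free_in x u1 \/ free_in x u2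
  | FEx y u | FAll y u => y <> x /\ free_in x u
  end.

Fixpoint bound_in (S : signature) (V : Type) (y : V) (u : formula S V) : Prop :=
  match u with
  | FEq _ _ => False
  | FNot u => bound_in y u
  | FAnd u1 u2 | FOr u1 u2 => bound_in y u1 \/ bound_in y u2
  | FEx z u | FAll z u => z = y \/ bound_in y u
  end.

Definition X_special (S : signature) (V : eqType) (X : seq V) (u : formula S V) : Prop :=
  (forall x, free_in x u -> x \in X) /\ (forall y, bound_in y u -> y \notin X).

(* An X-type: X-special formulas, consistent with the elementary theory of H
   (i.e. T together with all sentences true in H has a model). *)
Definition sentence (S : signature) (V : Type) (u : formula S V) : Prop :=
  forall x, ~ free_in x u.

Definition X_type (S : signature) (V : eqType) (H : algebra S) (X : seq V)
  (T : formula S V -> Prop) : Prop :=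
  (forall u, T u -> X_special X u) /\
  exists (M : algebra S),
    (forall phi : formula S V, sentence phi ->
       (forall e : V -> H, sat e phi) -> forall e : V -> M, sat e phi) /\
    exists e : V -> M, forall u, T u -> sat e u.

(* Variables of X, W(X) = term S (vX X), points mu : W(X) -> H are
   identified with their restriction to the free generators X. *)
Definition vX (V : eqType) (X : seq V) : eqType := seq_sub X.

Definition point (S : signature) (V : eqType) (X : seq V) (H : algebra S) :=
  vX X -> H.

(* Special homomorphism s : W(X^0) -> W(X), given by its values on X^0,
   fixing every x in X. *)
Definition special (S : signature) (V : eqType) (X : seq V)
  (s : V -> term S (vX X)) : Prop :=
  forall x (Hx : x \in X), s x = Var (SeqSub Hx).

(* Formulas of sort X of the multi-sorted algebra of formulas, including
   the images s_* u of one-sorted formulas under homomorphisms s. *)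
Inductive formX (S : signature) (V : eqType) (X : seq V) : Type :=
| XEq (t1 t2 : term S (vX X))
| XNot (u : formX S X)
| XAnd (u1 u2 : formX S X)
| XOr (u1 u2 : formX S X)
| XEx (x : vX X) (u : formX S X)
| XAll (x : vX X) (u : formX S X)
| XPush (s : V -> term S (vX X)) (u : formula S V).

Definition push (S : signature) (V : eqType) (X : seq V)
  (s : V -> term S (vX X)) (u : formula S V) : formX S X := XPush s u.

Fixpoint satX (S : signature) (V : eqType) (X : seq V) (H : algebra S)
  (mu : point X H) (u : formX S X) : Prop :=
  match u with
  | XEq t1 t2 => eval mu t1 = eval mu t2
  | XNot u => ~ satX mu u
  | XAnd u1 u2 => satX mu u1 /\ satX mu u2
  | XOr u1 u2 => satX mu u1 \/ satX mu u2
  | XEx x u => exists a : H, satX (upd mu x a) u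
  | XAll x u => forall a : H, satX (upd mu x a) u
  | XPush s u => sat (fun v => eval mu (s v)) u
  end.

Definition ValX (S : signature) (V : eqType) (X : seq V) (H : algebra S)
  (u : formX S X) : point X H -> Prop := fun mu => satX mu u.

Arguments ValX {S V X} H u mu.
Definition LKer (S : signature) (V : eqType) (X : seq V) (H : algebra S)
  (mu : point X H) : formX S X -> Prop := fun u => ValX H u mu.

Definition LH (S : signature) (V : eqType) (X : seq V) (H : algebra S)
  (T : formX S X -> Prop) : point X H -> Prop :=
  fun mu => forall u, T u -> LKer mu u.
Arguments LH {S V X} H T mu.

Definition push_set (S : signature) (V : eqType) (X : seq V)
  (s : V -> term S (vX X)) (T : formula S V -> Prop) : formX S X -> Prop :=
  fun v => exists u, T u /\ v = push s u.

Definition Tp (S : signature) (V : eqType) (X : seq V) (H : algebra S)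
  (mu : point X H) : formula S V -> Prop :=
  fun u => X_special X u /\
    forall e : V -> H, (forall x (Hx : x \in X), e x = mu (SeqSub Hx)) -> sat e u.

Definition L0H (S : signature) (V : eqType) (X : seq V) (H : algebra S)
  (T : formula S V -> Prop) : point X H -> Prop :=
  fun mu => forall u, T u -> Tp mu u.
Arguments L0H {S V} X H T mu.

From mathcomp Require Import all_boot.
From Stdlib Require Import FunctionalExtensionality PropExtensionality.

Set Implicit Arguments.
Unset Strict Implicit.
Unset Printing Implicit Defensive.

(* A special homomorphism s sends each x in X to itself, so for a point mu the
   composite mu s is an assignment of X^0 extending mu. An X-special formula u
   only depends on the values of its free variables, which lie in X; hence u
   holds at every extension of mu iff it holds at the particular extension mu s,
   i.e. u is in Tp^H(mu) iff s_* u is in LKer(mu). *)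

Lemma eval_eq_on_occurs (S : signature) (V : Type) (A : algebra S)
  (e1 e2 : V -> A) (t : term S V) :
  (forall x, occurs x t -> e1 x = e2 x) -> eval e1 t = eval e2 t.
Proof.
elim: t => [v|o args IH] /= e12; first exact: e12.
congr interp; apply: functional_extensionality => i.
by apply: IH => x xi; apply: e12; exists i.
Qed.

Lemma upd_eq_on (V : eqType) (A : Type) (P : V -> Prop) (e1 e2 : V -> A)
  (y : V) (a : A) :
  (forall x, y <> x -> P x -> e1 x = e2 x) ->
  forall x, P x -> upd e1 y a x = upd e2 y a x.
Proof.
move=> e12 x Px; rewrite /upd; case: eqP => // xy.
by apply: e12 => // yx; apply: xy.
Qed.

Lemma sat_iff_eq_on_free (S : signature) (V : eqType) (A : algebra S)
  (u : formula S V) (e1 e2 : V -> A) :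
  (forall x, free_in x u -> e1 x = e2 x) -> (sat e1 u <-> sat e2 u).
Proof.
elim: u e1 e2 => [t1 t2|u IH|u1 IH1 u2 IH2|u1 IH1 u2 IH2|y u IH|y u IH]
  e1 e2 e12 /=.
- rewrite (eval_eq_on_occurs (t := t1) (e2 := e2)).
    by rewrite (eval_eq_on_occurs (t := t2) (e2 := e2)) // => x xt; apply: e12; right.
  by move=> x xt; apply: e12; left.
- by rewrite (IH _ _ e12).
- by rewrite (IH1 e1 e2) ?(IH2 e1 e2) // => x xu; apply: e12; [right | left].
- by rewrite (IH1 e1 e2) ?(IH2 e1 e2) // => x xu; apply: e12; [right | left].
- have upd_iff a : sat (upd e1 y a) u <-> sat (upd e2 y a) u.
    by apply/IH/upd_eq_on => x yx xu; apply: e12.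
  by split=> -[a ua]; exists a; apply/upd_iff.
- have upd_iff a : sat (upd e1 y a) u <-> sat (upd e2 y a) u.
    by apply/IH/upd_eq_on => x yx xu; apply: e12.
  by split=> ua a; apply/upd_iff.
Qed.

Lemma eval_special (S : signature) (V : eqType) (X : seq V) (H : algebra S)
  (s : V -> term S (vX X)) (mu : point X H) :
  special s -> forall x (Xx : x \in X), eval mu (s x) = mu (SeqSub Xx).
Proof. by move=> hs x Xx; rewrite hs. Qed.

Lemma Tp_push (S : signature) (V : eqType) (X : seq V) (H : algebra S)
  (s : V -> term S (vX X)) (mu : point X H) (u : formula S V) :
  special s -> X_special X u -> Tp mu u <-> satX mu (push s u).
Proof.
move=> hs [freeX boundX]; split=> [[_ Tpu] | su]; first exact/Tpu/eval_special.
split=> // e e_mu; apply/(sat_iff_eq_on_free (e2 := fun v => eval mu (s v))) => //.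
by move=> x xu; rewrite (e_mu x (freeX x xu)) (eval_special _ hs (freeX x xu)).
Qed.

Theorem theorem3p12 (S : signature) (Theta : variety S) (H : algebra S)
  (hH : in_variety Theta H)
  (V : eqType) (hV : exists f : nat -> V, injective f)
  (X : seq V) (s : V -> term S (vX X)) (hs : special s)
  (T : formula S V -> Prop) (hT : X_type H X T) :
  L0H X H T = LH H (push_set s T).
Proof.
apply: functional_extensionality => mu; apply: propositional_extensionality.
have [T_special _] := hT.
split=> [Tmu _ [u [Tu ->]] | sTmu u Tu].
- exact/(Tp_push mu hs (T_special u Tu))/Tmu.
- by apply/(Tp_push mu hs (T_special u Tu)); apply: (sTmu (push s u)); exists u.
Qed.
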